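(* Let $L=2\pi\sqrt{7/3}$ and let $\mathcal A\varphi:=-\varphi'-\varphi'''$ on $D(\mathcal A):=\{\varphi\in H^3(0,L);\ \varphi(0)=\varphi(L)=\varphi'(L)=0\}$, considered on the complex space $L^2(0,L)$. Then \[ \sigma_p(\mathcal A)\cap i\mathbb R=\{\pm iq\},\qquad q=\frac{20}{21\sqrt{21}}, \] and the eigenfunctions of $\mathcal A$ associated with $\lambda=\pm iq$ are exactly $\varphi=C(\varphi_1\mp i\varphi_2)$, $C$ an arbitrary constant, where \[ \varphi_1(x)=\Theta\Big(\cos\tfrac{5x}{\sqrt{21}}-3\cos\tfrac{x}{\sqrt{21}}+2\cos\tfrac{4x}{\sqrt{21}}\Big),\quad \varphi_2(x)=\Theta\Big(-\sin\tfrac{5x}{\sqrt{21}}-3\sin\tfrac{x}{\sqrt{21}}+2\sin\tfrac{4x}{\sqrt{21}}\Big), \] with $\Theta:=\frac{1}{\sqrt{14\pi}}\left(\frac37\right)^{1/4}$.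
   Context: $\sigma_p(\mathcal A)$ denotes the set of eigenvalues of $\mathcal A$. *)

(* classical real numbers. Complex-valued functions are
   represented by their real and imaginary parts (u, v : R -> R). *)
From Stdlib Require Import Reals.
Open Scope R_scope.

Definition Lc : R := 2 * PI * sqrt (7 / 3).

Definition q : R := 20 / (21 * sqrt 21).

Definition Theta : R := (1 / sqrt (14 * PI)) * Rpower (3 / 7) (1 / 4).

Definition phi1 (x : R) : R :=
  Theta * (cos (5 * x / sqrt 21) - 3 * cos (x / sqrt 21) + 2 * cos (4 * x / sqrt 21)).

Definition phi2 (x : R) : R :=
  Theta * (- sin (5 * x / sqrt 21) - 3 * sin (x / sqrt 21) + 2 * sin (4 * x / sqrt 21)).

Definition has_deriv_on (a b : R) (f f' : R -> R) : Prop :=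
  forall x, a <= x <= b ->
  forall eps, 0 < eps -> exists delta, 0 < delta /\
    forall h, h <> 0 -> Rabs h < delta -> a <= x + h <= b ->
      Rabs ((f (x + h) - f x) / h - f' x) < eps.

(* phi = u + i v lies in D(A) and satisfies A phi = lam phi,
   lam = lr + i li, where A phi = - phi' - phi'''. *)
Definition eigen_eq (lr li : R) (u v : R -> R) : Prop :=
  exists u1 u2 u3 v1 v2 v3 : R -> R,
    has_deriv_on 0 Lc u u1 /\ has_deriv_on 0 Lc u1 u2 /\ has_deriv_on 0 Lc u2 u3 /\
    has_deriv_on 0 Lc v v1 /\ has_deriv_on 0 Lc v1 v2 /\ has_deriv_on 0 Lc v2 v3 /\
    u 0 = 0 /\ v 0 = 0 /\ u Lc = 0 /\ v Lc = 0 /\ u1 Lc = 0 /\ v1 Lc = 0 /\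
    (forall x, 0 <= x <= Lc ->
       - u1 x - u3 x = lr * u x - li * v x /\
       - v1 x - v3 x = lr * v x + li * u x).

Definition is_eigenvalue (lr li : R) : Prop :=
  exists u v : R -> R, eigen_eq lr li u v /\
    exists x, 0 <= x <= Lc /\ (u x <> 0 \/ v x <> 0).

From Stdlib Require Import Reals Lra Lia Psatz ZArith.
From Coquelicot Require Import Coquelicot.
Open Scope R_scope.

(* For [lambda = i w], every root [mu] of [mu ^ 3 + mu + i w] makes
   [exp (- mu x) (phi'' + mu phi' + (mu ^ 2 + 1) phi)] constant.  With the boundary conditions and
   [phi' 0 = 0], which follows from the first integral [|phi|^2 + 2 Re (phi'' conj phi) - |phi'|^2],
   this gives [phi'' 0 = exp (- mu L) phi'' L] for all three roots, and [phi'' 0 <> 0] for an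
   eigenfunction by uniqueness for the Cauchy problem at [0].  Comparing moduli forces the roots to be
   imaginary, [mu = i k], and comparing arguments gives [(k - k') L] in [2 pi Z].  For
   [L = 2 pi sqrt 21 / 3] this makes [S = k sqrt 21] an integer with [S (S^2 - 21) = +- 20], whence
   [w = +- 20 / (21 sqrt 21)].  Conversely, the roots [5, -1, -4] of [c^3 - 21 c - 20] give the
   frequencies [+- c / sqrt 21] of the eigenfunction [phi1 -+ i phi2], and every eigenfunction is the
   multiple of it with the same [phi'' 0]. *)

(** * Derivatives on a closed interval *)

Lemma has_deriv_on_ext a b f g f' g' :
  (forall x, a <= x <= b -> f x = g x) -> (forall x, a <= x <= b -> f' x = g' x) ->
  has_deriv_on a b f f' -> has_deriv_on a b g g'.
Proof.
  intros Efg Ef' Hf x Hx eps Heps.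
  destruct (Hf x Hx eps Heps) as [d [Hd Hq]].
  exists d; split; [exact Hd|].
  intros h Hh Hlt Hin. rewrite <- !Efg, <- Ef' by lra. auto.
Qed.

Lemma has_deriv_on_lincomb a b (al be : R) f f' g g' :
  has_deriv_on a b f f' -> has_deriv_on a b g g' ->
  has_deriv_on a b (fun x => al * f x + be * g x) (fun x => al * f' x + be * g' x).
Proof.
  intros Hf Hg x Hx eps Heps.
  set (C := Rabs al + Rabs be + 1).
  assert (HC : 0 < C) by (unfold C; pose proof (Rabs_pos al); pose proof (Rabs_pos be); lra).
  destruct (Hf x Hx (eps / C)) as [d1 [Hd1 Hq1]]; [apply Rdiv_lt_0_compat; lra|].
  destruct (Hg x Hx (eps / C)) as [d2 [Hd2 Hq2]]; [apply Rdiv_lt_0_compat; lra|].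
  exists (Rmin d1 d2); split; [now apply Rmin_pos|].
  intros h Hh Hlt Hin.
  specialize (Hq1 h Hh (Rlt_le_trans _ _ _ Hlt (Rmin_l _ _)) Hin).
  specialize (Hq2 h Hh (Rlt_le_trans _ _ _ Hlt (Rmin_r _ _)) Hin).
  replace ((al * f (x + h) + be * g (x + h) - (al * f x + be * g x)) / h - (al * f' x + be * g' x))
    with (al * ((f (x + h) - f x) / h - f' x) + be * ((g (x + h) - g x) / h - g' x)) by (field; exact Hh).
  eapply Rle_lt_trans; [apply Rabs_triang|]. rewrite !Rabs_mult.
  set (e := eps / C) in *.
  assert (He : 0 < e) by (apply Rdiv_lt_0_compat; lra).
  assert (HCe : C * e = eps) by (unfold e; field; lra).
  assert (Rabs al * Rabs ((f (x + h) - f x) / h - f' x) <= Rabs al * e)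
    by (apply Rmult_le_compat_l; [apply Rabs_pos | lra]).
  assert (Rabs be * Rabs ((g (x + h) - g x) / h - g' x) <= Rabs be * e)
    by (apply Rmult_le_compat_l; [apply Rabs_pos | lra]).
  unfold C in HCe. lra.
Qed.

Lemma has_deriv_on_derivable a b f f' :
  (forall x, derivable_pt_lim f x (f' x)) -> has_deriv_on a b f f'.
Proof.
  intros H x _ eps Heps. destruct (H x eps Heps) as [d Hd].
  exists d. split; [apply cond_pos|]. intros h Hh Hlt _. now apply Hd.
Qed.

Lemma has_deriv_on_continuous_within a b f f' x :
  has_deriv_on a b f f' -> a <= x <= b ->
  forall eps, 0 < eps -> exists d, 0 < d /\
    forall y, a <= y <= b -> Rabs (y - x) < d -> Rabs (f y - f x) < eps.
Proof.
  intros H Hx eps Heps.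
  destruct (H x Hx 1 Rlt_0_1) as [d1 [Hd1 Hq]].
  set (K := Rabs (f' x) + 1).
  assert (HK : 0 < K) by (unfold K; pose proof (Rabs_pos (f' x)); lra).
  exists (Rmin d1 (eps / K)). split; [apply Rmin_pos; [lra | apply Rdiv_lt_0_compat; lra]|].
  intros y Hy Hyx.
  destruct (Req_dec y x) as [->|Hne]; [rewrite Rminus_eq_0, Rabs_R0; exact Heps|].
  pose proof (Rmin_l d1 (eps / K)); pose proof (Rmin_r d1 (eps / K)).
  specialize (Hq (y - x) ltac:(lra) ltac:(lra) ltac:(replace (x + (y - x)) with y by ring; lra)).
  replace (x + (y - x)) with y in Hq by ring.
  set (Q := (f y - f x) / (y - x)) in Hq.
  replace (f y - f x) with (Q * (y - x)) by (unfold Q; field; lra).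
  rewrite Rabs_mult.
  assert (HQ : Rabs Q < K).
  { unfold K. pose proof (Rabs_triang (Q - f' x) (f' x)). replace (Q - f' x + f' x) with Q in * by ring. lra. }
  assert (Hyx' : Rabs (y - x) * K < eps).
  { assert (Hyx2 : Rabs (y - x) < eps / K) by lra.
    apply (Rmult_lt_compat_r K) in Hyx2; [|lra]. apply (Rlt_le_trans _ _ _ Hyx2).
    right; field; lra. }
  pose proof (Rabs_pos Q); pose proof (Rabs_pos (y - x)). nra.
Qed.

Section ClampedDerivative.

Variables a b : R.
Hypothesis Hab : a <= b.

Definition clamp x := Rmax a (Rmin b x).

(* [f] extended by its end values outside [a, b] is continuous and has derivative [f'] on (a, b);
   unlike [has_deriv_on], this form plugs into the mean value theorem and the rules of [Reals]. *)
Definition has_clamped_deriv (f f' : R -> R) :=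
  (forall x, continuity_pt (fun y => f (clamp y)) x) /\
  (forall x, a < x < b -> derivable_pt_lim (fun y => f (clamp y)) x (f' x)).

Lemma clamp_id x : a <= x <= b -> clamp x = x.
Proof. intros. unfold clamp, Rmax, Rmin. repeat destruct Rle_dec; lra. Qed.

Lemma clamp_in x : a <= clamp x <= b.
Proof. unfold clamp, Rmax, Rmin. repeat destruct Rle_dec; lra. Qed.

Lemma clamp_dist x y : Rabs (clamp y - clamp x) <= Rabs (y - x).
Proof. unfold clamp, Rmax, Rmin. repeat destruct Rle_dec; split_Rabs; lra. Qed.

Lemma has_deriv_on_clamped f f' : has_deriv_on a b f f' -> has_clamped_deriv f f'.
Proof.
  intros H. split.
  - intros x eps Heps.
    destruct (has_deriv_on_continuous_within _ _ _ _ (clamp x) H (clamp_in x) eps Heps) as [d [Hd Hc]].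
    exists d. split; [exact Hd|]. intros y [_ Hy]. simpl in *. unfold R_dist in *.
    apply Hc; [apply clamp_in|]. pose proof (clamp_dist x y). lra.
  - intros x Hx eps Heps.
    destruct (H x ltac:(lra) eps Heps) as [d [Hd Hq]].
    assert (Hp : 0 < Rmin d (Rmin (x - a) (b - x))) by (repeat apply Rmin_pos; lra).
    exists (mkposreal _ Hp). intros h Hh Hlt. simpl in Hlt.
    pose proof (Rmin_l d (Rmin (x - a) (b - x))); pose proof (Rmin_r d (Rmin (x - a) (b - x))).
    pose proof (Rmin_l (x - a) (b - x)); pose proof (Rmin_r (x - a) (b - x)).
    assert (- Rabs h <= h <= Rabs h) by (split_Rabs; lra).
    rewrite !clamp_id by lra. apply Hq; lra.
Qed.

Lemma has_clamped_deriv_derivable f f' :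
  (forall x, derivable_pt_lim f x (f' x)) -> has_clamped_deriv f f'.
Proof. intros H. now apply has_deriv_on_clamped, has_deriv_on_derivable. Qed.

Lemma has_clamped_deriv_ext f f' g' : has_clamped_deriv f f' ->
  (forall x, a <= x <= b -> f' x = g' x) -> has_clamped_deriv f g'.
Proof. intros [Hc Hd] E. split; [exact Hc|]. intros x Hx. rewrite <- E by lra. auto. Qed.

Lemma has_clamped_deriv_const c : has_clamped_deriv (fun _ => c) (fun _ => 0).
Proof. apply has_clamped_deriv_derivable. intros x. apply derivable_pt_lim_const. Qed.

Lemma has_clamped_deriv_plus f f' g g' : has_clamped_deriv f f' -> has_clamped_deriv g g' ->
  has_clamped_deriv (fun x => f x + g x) (fun x => f' x + g' x).
Proof.
  intros [Hf Hf'] [Hg Hg']. split; intros x.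
  - exact (continuity_pt_plus _ _ _ (Hf x) (Hg x)).
  - intros Hx. exact (derivable_pt_lim_plus _ _ _ _ _ (Hf' x Hx) (Hg' x Hx)).
Qed.

Lemma has_clamped_deriv_opp f f' : has_clamped_deriv f f' ->
  has_clamped_deriv (fun x => - f x) (fun x => - f' x).
Proof.
  intros [Hf Hf']. split; intros x.
  - exact (continuity_pt_opp _ _ (Hf x)).
  - intros Hx. exact (derivable_pt_lim_opp _ _ _ (Hf' x Hx)).
Qed.

Lemma has_clamped_deriv_minus f f' g g' : has_clamped_deriv f f' -> has_clamped_deriv g g' ->
  has_clamped_deriv (fun x => f x - g x) (fun x => f' x - g' x).
Proof.
  intros [Hf Hf'] [Hg Hg']. split; intros x.
  - exact (continuity_pt_minus _ _ _ (Hf x) (Hg x)).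
  - intros Hx. exact (derivable_pt_lim_minus _ _ _ _ _ (Hf' x Hx) (Hg' x Hx)).
Qed.

Lemma has_clamped_deriv_mult f f' g g' : has_clamped_deriv f f' -> has_clamped_deriv g g' ->
  has_clamped_deriv (fun x => f x * g x) (fun x => f' x * g x + f x * g' x).
Proof.
  intros [Hf Hf'] [Hg Hg']. split; intros x.
  - exact (continuity_pt_mult _ _ _ (Hf x) (Hg x)).
  - intros Hx. pose proof (derivable_pt_lim_mult _ _ _ _ _ (Hf' x Hx) (Hg' x Hx)) as H.
    cbv beta in H. now rewrite clamp_id in H by lra.
Qed.

Lemma has_clamped_deriv_nonpos_antitone g g' : has_clamped_deriv g g' ->
  (forall x, a <= x <= b -> g' x <= 0) -> forall x y, a <= x <= y -> y <= b -> g y <= g x.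
Proof.
  intros [Hc Hd] Hneg x y Hxy Hyb.
  destruct (Req_dec x y) as [->|Hne]; [lra|].
  destruct (MVT_gen (fun z => g (clamp z)) x y g') as [c [Hcxy Hmvt]].
  - intros z Hz. rewrite Rmin_left, Rmax_right in Hz by lra.
    apply is_derive_Reals, Hd. lra.
  - intros z _. apply Hc.
  - rewrite Rmin_left, Rmax_right in Hcxy by lra.
    rewrite !clamp_id in Hmvt by lra.
    assert (g' c <= 0) by (apply Hneg; lra). nra.
Qed.

Lemma has_clamped_deriv_zero_const g g' : has_clamped_deriv g g' ->
  (forall x, a <= x <= b -> g' x = 0) -> g b = g a.
Proof.
  intros Hg Hz.
  pose proof (has_clamped_deriv_nonpos_antitone g g' Hg
    ltac:(intros; rewrite Hz; lra) a b ltac:(lra) ltac:(lra)).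
  pose proof (has_clamped_deriv_nonpos_antitone _ _ (has_clamped_deriv_opp g g' Hg)
    ltac:(intros; cbv beta; rewrite Hz; lra) a b ltac:(lra) ltac:(lra)).
  cbv beta in *. lra.
Qed.

End ClampedDerivative.

Lemma has_clamped_deriv_exp a b c : a <= b ->
  has_clamped_deriv a b (fun x => exp (c * x)) (fun x => c * exp (c * x)).
Proof.
  intros Hab. apply has_clamped_deriv_derivable; [exact Hab|].
  intros x. apply is_derive_Reals. auto_derive; [easy | ring].
Qed.

Lemma has_clamped_deriv_cos a b c : a <= b ->
  has_clamped_deriv a b (fun x => cos (c * x)) (fun x => - c * sin (c * x)).
Proof.
  intros Hab. apply has_clamped_deriv_derivable; [exact Hab|].
  intros x. apply is_derive_Reals. auto_derive; [easy | ring].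
Qed.

Lemma has_clamped_deriv_sin a b c : a <= b ->
  has_clamped_deriv a b (fun x => sin (c * x)) (fun x => c * cos (c * x)).
Proof.
  intros Hab. apply has_clamped_deriv_derivable; [exact Hab|].
  intros x. apply is_derive_Reals. auto_derive; [easy | ring].
Qed.

Local Ltac clamped_deriv := repeat first
  [ eassumption | apply has_clamped_deriv_plus | apply has_clamped_deriv_minus
  | apply has_clamped_deriv_mult | apply has_clamped_deriv_opp | apply has_clamped_deriv_exp
  | apply has_clamped_deriv_cos | apply has_clamped_deriv_sin | apply has_clamped_deriv_const ].

(** * The eigenvalue equation *)

Set Implicit Arguments.
Record ode_sol (L w : R) (u u1 u2 u3 v v1 v2 v3 : R -> R) : Prop := {
  ode_du : has_deriv_on 0 L u u1;
  ode_du1 : has_deriv_on 0 L u1 u2;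
  ode_du2 : has_deriv_on 0 L u2 u3;
  ode_dv : has_deriv_on 0 L v v1;
  ode_dv1 : has_deriv_on 0 L v1 v2;
  ode_dv2 : has_deriv_on 0 L v2 v3;
  ode_eq : forall x, 0 <= x <= L -> u3 x = - u1 x + w * v x /\ v3 x = - v1 x - w * u x }.
Unset Implicit Arguments.

Lemma energy_ineq w a a1 a2 b b1 b2 :
  2 * (a * a1 + a1 * a2 + a2 * (- a1 + w * b) + b * b1 + b1 * b2 + b2 * (- b1 - w * a))
  <= (2 + w * w) * (a * a + a1 * a1 + a2 * a2 + b * b + b1 * b1 + b2 * b2).
Proof.
  pose proof (Rle_0_sqr (a - a1)); pose proof (Rle_0_sqr (b - b1)).
  pose proof (Rle_0_sqr (w * a2 - b)); pose proof (Rle_0_sqr (w * b2 + a)).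
  pose proof (Rle_0_sqr (w * a)); pose proof (Rle_0_sqr (w * b));
  pose proof (Rle_0_sqr (w * a1)); pose proof (Rle_0_sqr (w * b1)).
  pose proof (Rle_0_sqr a1); pose proof (Rle_0_sqr b1); pose proof (Rle_0_sqr a2); pose proof (Rle_0_sqr b2).
  unfold Rsqr in *. nra.
Qed.

(* [a + i b] is a root of the characteristic polynomial [mu ^ 3 + mu + i w]. *)
Definition char_root (w a b : R) :=
  a ^ 3 - 3 * a * b ^ 2 + a = 0 /\ 3 * a ^ 2 * b - b ^ 3 + b + w = 0.

Section EigenODE.

Variables (L w : R) (u u1 u2 u3 v v1 v2 v3 : R -> R).
Hypotheses (HL : 0 <= L) (sol : ode_sol L w u u1 u2 u3 v v1 v2 v3).

Let Du := has_deriv_on_clamped _ _ HL _ _ (ode_du sol).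
Let Du1 := has_deriv_on_clamped _ _ HL _ _ (ode_du1 sol).
Let Du2 := has_deriv_on_clamped _ _ HL _ _ (ode_du2 sol).
Let Dv := has_deriv_on_clamped _ _ HL _ _ (ode_dv sol).
Let Dv1 := has_deriv_on_clamped _ _ HL _ _ (ode_dv1 sol).
Let Dv2 := has_deriv_on_clamped _ _ HL _ _ (ode_dv2 sol).

Lemma ode_sol_zero_of_zero_data :
  u 0 = 0 -> u1 0 = 0 -> u2 0 = 0 -> v 0 = 0 -> v1 0 = 0 -> v2 0 = 0 ->
  forall x, 0 <= x <= L -> u x = 0 /\ v x = 0.
Proof.
  intros Hu Hu1 Hu2 Hv Hv1 Hv2 x Hx.
  set (K := 2 + w * w).
  set (E := fun x => u x * u x + u1 x * u1 x + u2 x * u2 x + v x * v x + v1 x * v1 x + v2 x * v2 x).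
  (* Gronwall: [E' <= K E] by [energy_ineq], so [exp (- K x) E x] is nonincreasing. *)
  assert (Dg : has_clamped_deriv 0 L (fun x => exp (- K * x) * E x) (fun x => exp (- K * x) *
    (2 * (u x * u1 x + u1 x * u2 x + u2 x * (- u1 x + w * v x)
          + v x * v1 x + v1 x * v2 x + v2 x * (- v1 x - w * u x)) - K * E x))).
  { eapply has_clamped_deriv_ext; [unfold E; clamped_deriv|].
    intros y Hy. destruct (ode_eq sol Hy) as [-> ->]. unfold E. ring. }
  assert (Hdec := has_clamped_deriv_nonpos_antitone _ _ HL _ _ Dg).
  specialize (Hdec ltac:(intros y _; pose proof (exp_pos (- K * y));
    pose proof (energy_ineq w (u y) (u1 y) (u2 y) (v y) (v1 y) (v2 y));
    apply Rmult_le_0_l; unfold E, K in *; lra) 0 x ltac:(lra) ltac:(lra)).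
  cbv beta in Hdec. rewrite Rmult_0_r, exp_0, Rmult_1_l in Hdec.
  assert (HE0 : E 0 = 0) by (unfold E; rewrite Hu, Hu1, Hu2, Hv, Hv1, Hv2; ring).
  rewrite HE0 in Hdec.
  assert (HEx : E x <= 0).
  { pose proof (exp_pos (- K * x)).
    destruct (Rle_dec (E x) 0) as [|Hpos]; [assumption|].
    assert (0 < exp (- K * x) * E x) by (apply Rmult_lt_0_compat; lra). lra. }
  unfold E in HEx.
  pose proof (Rle_0_sqr (u x)); pose proof (Rle_0_sqr (v x));
  pose proof (Rle_0_sqr (u1 x)); pose proof (Rle_0_sqr (v1 x));
  pose proof (Rle_0_sqr (u2 x)); pose proof (Rle_0_sqr (v2 x)).
  unfold Rsqr in *. split; nra.
Qed.

Lemma ode_sol_first_integral :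
  let N x := u x * u x + v x * v x + 2 * (u2 x * u x + v2 x * v x) - u1 x * u1 x - v1 x * v1 x in
  N L = N 0.
Proof.
  intros N.
  eassert (DN : has_clamped_deriv 0 L N _) by (unfold N; clamped_deriv).
  apply (has_clamped_deriv_zero_const _ _ HL _ _ DN).
  intros y Hy. destruct (ode_eq sol Hy) as [-> ->]. ring.
Qed.

Lemma ode_sol_deriv0_eq0 :
  u 0 = 0 -> v 0 = 0 -> u L = 0 -> v L = 0 -> u1 L = 0 -> v1 L = 0 -> u1 0 = 0 /\ v1 0 = 0.
Proof.
  intros Hu0 Hv0 HuL HvL Hu1L Hv1L.
  pose proof ode_sol_first_integral as HN; cbv beta zeta in HN.
  rewrite Hu0, Hv0, HuL, HvL, Hu1L, Hv1L in HN.
  pose proof (Rle_0_sqr (u1 0)); pose proof (Rle_0_sqr (v1 0)).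
  unfold Rsqr in *. split; nra.
Qed.

(* For a characteristic root [mu = a + i b], the function
   [exp (- mu x) (phi'' + mu phi' + (mu ^ 2 + 1) phi)] is constant. *)
Lemma ode_sol_boundary_transfer a b : char_root w a b ->
  u 0 = 0 -> v 0 = 0 -> u1 0 = 0 -> v1 0 = 0 -> u L = 0 -> v L = 0 -> u1 L = 0 -> v1 L = 0 ->
  exp (- a * L) * (cos (b * L) * u2 L + sin (b * L) * v2 L) = u2 0 /\
  exp (- a * L) * (cos (b * L) * v2 L - sin (b * L) * u2 L) = v2 0.
Proof.
  intros [Er Ei] Hu0 Hv0 Hu10 Hv10 HuL HvL Hu1L Hv1L.
  set (GR x := u2 x + a * u1 x - b * v1 x + (a ^ 2 - b ^ 2 + 1) * u x - 2 * a * b * v x).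
  set (GI x := v2 x + a * v1 x + b * u1 x + (a ^ 2 - b ^ 2 + 1) * v x + 2 * a * b * u x).
  eassert (DR : has_clamped_deriv 0 L
    (fun x => exp (- a * x) * (cos (b * x) * GR x + sin (b * x) * GI x)) _)
    by (unfold GR, GI; clamped_deriv).
  eassert (DI : has_clamped_deriv 0 L
    (fun x => exp (- a * x) * (cos (b * x) * GI x - sin (b * x) * GR x)) _)
    by (unfold GR, GI; clamped_deriv).
  pose proof (has_clamped_deriv_zero_const _ _ HL _ _ DR) as HR.
  pose proof (has_clamped_deriv_zero_const _ _ HL _ _ DI) as HI.
  cbv beta in HR, HI.
  assert (GR0 : GR 0 = u2 0) by (unfold GR; rewrite Hu0, Hv0, Hu10, Hv10; ring).
  assert (GI0 : GI 0 = v2 0) by (unfold GI; rewrite Hu0, Hv0, Hu10, Hv10; ring).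
  assert (GRL : GR L = u2 L) by (unfold GR; rewrite HuL, HvL, Hu1L, Hv1L; ring).
  assert (GIL : GI L = v2 L) by (unfold GI; rewrite HuL, HvL, Hu1L, Hv1L; ring).
  rewrite GR0, GI0, GRL, GIL, !Rmult_0_r, cos_0, sin_0, exp_0 in HR, HI.
  split; [rewrite HR | rewrite HI]; try ring; intros y Hy;
    destruct (ode_eq sol Hy) as [Eu Ev]; unfold GR, GI; rewrite Eu, Ev.
  - transitivity (- exp (- a * y) *
      ((cos (b * y) * u y + sin (b * y) * v y) * (a ^ 3 - 3 * a * b ^ 2 + a)
       - (cos (b * y) * v y - sin (b * y) * u y) * (3 * a ^ 2 * b - b ^ 3 + b + w)));
      [ring | rewrite Er, Ei; ring].
  - transitivity (- exp (- a * y) *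
      ((cos (b * y) * u y + sin (b * y) * v y) * (3 * a ^ 2 * b - b ^ 3 + b + w)
       + (cos (b * y) * v y - sin (b * y) * u y) * (a ^ 3 - 3 * a * b ^ 2 + a)));
      [ring | rewrite Er, Ei; ring].
Qed.

End EigenODE.

Local Ltac lincomb Hf Hg al be :=
  eapply has_deriv_on_ext; [| | exact (has_deriv_on_lincomb _ _ al be _ _ _ _ Hf Hg)];
  intros; cbv beta; ring.

Lemma ode_sol_cmul L w a b u u1 u2 u3 v v1 v2 v3 : ode_sol L w u u1 u2 u3 v v1 v2 v3 ->
  ode_sol L w
    (fun x => a * u x - b * v x) (fun x => a * u1 x - b * v1 x)
    (fun x => a * u2 x - b * v2 x) (fun x => a * u3 x - b * v3 x)
    (fun x => a * v x + b * u x) (fun x => a * v1 x + b * u1 x)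
    (fun x => a * v2 x + b * u2 x) (fun x => a * v3 x + b * u3 x).
Proof.
  intros [Du Du1 Du2 Dv Dv1 Dv2 Heq]. constructor;
    [ lincomb Du Dv a (- b) | lincomb Du1 Dv1 a (- b) | lincomb Du2 Dv2 a (- b)
    | lincomb Dv Du a b | lincomb Dv1 Du1 a b | lincomb Dv2 Du2 a b |].
  intros x Hx; cbv beta. destruct (Heq x Hx) as [-> ->]. split; ring.
Qed.

Lemma ode_sol_sub L w u u1 u2 u3 v v1 v2 v3 U U1 U2 U3 V V1 V2 V3 :
  ode_sol L w u u1 u2 u3 v v1 v2 v3 -> ode_sol L w U U1 U2 U3 V V1 V2 V3 ->
  ode_sol L w
    (fun x => u x - U x) (fun x => u1 x - U1 x) (fun x => u2 x - U2 x) (fun x => u3 x - U3 x)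
    (fun x => v x - V x) (fun x => v1 x - V1 x) (fun x => v2 x - V2 x) (fun x => v3 x - V3 x).
Proof.
  intros [Du Du1 Du2 Dv Dv1 Dv2 Heq] [DU DU1 DU2 DV DV1 DV2 HEq]. constructor;
    [ lincomb Du DU 1 (-1) | lincomb Du1 DU1 1 (-1) | lincomb Du2 DU2 1 (-1)
    | lincomb Dv DV 1 (-1) | lincomb Dv1 DV1 1 (-1) | lincomb Dv2 DV2 1 (-1) |].
  intros x Hx; cbv beta. destruct (Heq x Hx) as [-> ->], (HEq x Hx) as [-> ->]. split; ring.
Qed.

Lemma ode_sol_ext L w u u1 u2 u3 v v1 v2 v3 U V :
  (forall x, 0 <= x <= L -> U x = u x /\ V x = v x) ->
  ode_sol L w u u1 u2 u3 v v1 v2 v3 -> ode_sol L w U u1 u2 u3 V v1 v2 v3.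
Proof.
  intros E [Du Du1 Du2 Dv Dv1 Dv2 Heq]. constructor; try assumption.
  - apply (has_deriv_on_ext _ _ u U u1 u1); [intros; symmetry; apply E; lra | easy | exact Du].
  - apply (has_deriv_on_ext _ _ v V v1 v1); [intros; symmetry; apply E; lra | easy | exact Dv].
  - intros x Hx. destruct (E x Hx) as [-> ->]. now apply Heq.
Qed.

Lemma eigen_eq_iff w u v : eigen_eq 0 w u v <->
  exists u1 u2 u3 v1 v2 v3, ode_sol Lc w u u1 u2 u3 v v1 v2 v3 /\
    u 0 = 0 /\ v 0 = 0 /\ u Lc = 0 /\ v Lc = 0 /\ u1 Lc = 0 /\ v1 Lc = 0.
Proof.
  split.
  - intros (u1 & u2 & u3 & v1 & v2 & v3 & Du & Du1 & Du2 & Dv & Dv1 & Dv2 & B0 & B1 & B2 & B3 & B4 & B5 & Heq).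
    exists u1, u2, u3, v1, v2, v3. split; [|tauto].
    constructor; try assumption. intros x Hx. destruct (Heq x Hx). split; lra.
  - intros (u1 & u2 & u3 & v1 & v2 & v3 & [Du Du1 Du2 Dv Dv1 Dv2 Heq] & B0 & B1 & B2 & B3 & B4 & B5).
    exists u1, u2, u3, v1, v2, v3. repeat (split; [assumption|]).
    intros x Hx. destruct (Heq x Hx). split; lra.
Qed.

(** * The eigenfunctions [phi1 -+ i phi2] *)

Local Notation r := (sqrt 21).

Lemma r_pos : 0 < r.
Proof. apply sqrt_lt_R0. lra. Qed.

Lemma r_sq : r * r = 21.
Proof. apply sqrt_sqrt. lra. Qed.

Lemma Lc_r : Lc = 2 * PI * r / 3.
Proof.
  unfold Lc. replace (sqrt (7 / 3)) with (r / 3); [field|].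
  symmetry. apply sqrt_lem_1; [lra | pose proof r_pos; lra |].
  replace (r / 3 * (r / 3)) with (r * r / 9) by field. rewrite r_sq. field.
Qed.

Lemma Lc_pos : 0 < Lc.
Proof. rewrite Lc_r. pose proof PI_RGT_0; pose proof r_pos. nra. Qed.

Lemma Theta_pos : 0 < Theta.
Proof.
  unfold Theta. apply Rmult_lt_0_compat; [|apply exp_pos].
  apply Rdiv_lt_0_compat; [lra|]. apply sqrt_lt_R0. pose proof PI_RGT_0. lra.
Qed.

Lemma cos_period_Z x (k : Z) : cos (x + IZR k * (2 * PI)) = cos x.
Proof.
  assert (Hs : sin (IZR k * PI) = 0) by (apply sin_eq_0_1; now exists k).
  replace (IZR k * (2 * PI)) with (2 * (IZR k * PI)) by ring.
  rewrite cos_plus, cos_2a_sin, sin_2a, Hs. ring.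
Qed.

Lemma sin_period_Z x (k : Z) : sin (x + IZR k * (2 * PI)) = sin x.
Proof.
  assert (Hs : sin (IZR k * PI) = 0) by (apply sin_eq_0_1; now exists k).
  replace (IZR k * (2 * PI)) with (2 * (IZR k * PI)) by ring.
  rewrite sin_plus, cos_2a_sin, sin_2a, Hs. ring.
Qed.

Definition mode (f : R -> R) (n : nat) (k x : R) : R := k ^ n * f (k * x).

(* [wave cos 0 s + i wave sin 0 s = phi1 - i s phi2] is [Theta] times the combination with weights
   [1, -3, 2] of the exponentials [exp (i k x)], [k = s c / sqrt 21], where [c = 5, -1, -4] are the
   roots of [c ^ 3 - 21 c - 20]; [wave cos n s], [wave sin n s] give its [n]-th derivative up to sign. *)
Definition wave (f : R -> R) (n : nat) (s x : R) : R :=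
  Theta * (mode f n (s * (5 / r)) x - 3 * mode f n (s * (-1 / r)) x
           + 2 * mode f n (s * (-4 / r)) x).

Lemma wave_freq s c : s * s = 1 -> c ^ 3 - 21 * c - 20 = 0 ->
  (s * (c / r)) ^ 3 = s * (c / r) + s * q.
Proof.
  intros Hs Hc. pose proof r_pos as Hr. unfold q.
  replace ((s * (c / r)) ^ 3) with (s * (s * s) * c ^ 3 / (r * r * r)) by (field; lra).
  rewrite Hs, r_sq. replace (c ^ 3) with (21 * c + 20) by lra. field. lra.
Qed.

Lemma wave_eq f s x : s * s = 1 -> wave f 3 s x = wave f 1 s x + s * q * wave f 0 s x.
Proof.
  intros Hs. unfold wave, mode.
  rewrite !(wave_freq s) by (assumption || ring). ring.
Qed.

Lemma wave_sol L s : s * s = 1 ->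
  ode_sol L (s * q)
    (wave cos 0 s) (fun x => - wave sin 1 s x) (fun x => - wave cos 2 s x) (wave sin 3 s)
    (wave sin 0 s) (wave cos 1 s) (fun x => - wave sin 2 s x) (fun x => - wave cos 3 s x).
Proof.
  intros Hs. constructor;
    try (apply has_deriv_on_derivable; intros x; apply is_derive_Reals;
         unfold wave, mode; auto_derive; [easy | ring]).
  intros x _. rewrite !(wave_eq _ s x Hs). split; ring.
Qed.

Lemma wave_at_0 f n s : wave f n s 0 =
  Theta * f 0 * ((s * (5 / r)) ^ n - 3 * (s * (-1 / r)) ^ n + 2 * (s * (-4 / r)) ^ n).
Proof. unfold wave, mode. rewrite !Rmult_0_r. ring. Qed.

(* All three frequencies are congruent modulo 3, so all modes take the same value at [Lc]. *)
Lemma mode_at_Lc f n s c (j : Z) :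
  (forall x k, f (x + IZR k * (2 * PI)) = f x) -> s = 1 \/ s = -1 -> c = -1 + 3 * IZR j ->
  mode f n (s * (c / r)) Lc = (s * (c / r)) ^ n * f (- s * (2 * PI / 3)).
Proof.
  intros Hf Hs Hc. unfold mode. f_equal.
  assert (Hj : exists k : Z, s * (c / r) * Lc = - s * (2 * PI / 3) + IZR k * (2 * PI)).
  { pose proof r_pos. rewrite Lc_r, Hc.
    destruct Hs as [-> | ->]; [exists j | exists (- j)%Z; rewrite opp_IZR]; field; lra. }
  destruct Hj as [k ->]. apply Hf.
Qed.

Lemma wave_at_Lc f n s :
  (forall x k, f (x + IZR k * (2 * PI)) = f x) -> s = 1 \/ s = -1 -> wave f n s Lc =
  Theta * f (- s * (2 * PI / 3)) * ((s * (5 / r)) ^ n - 3 * (s * (-1 / r)) ^ n + 2 * (s * (-4 / r)) ^ n).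
Proof.
  intros Hf Hs. unfold wave.
  rewrite (mode_at_Lc f n s 5 2), (mode_at_Lc f n s (-1) 0), (mode_at_Lc f n s (-4) (-1))
    by (assumption || lra).
  ring.
Qed.

Lemma cos_sign s y : s = 1 \/ s = -1 -> cos (s * y) = cos y.
Proof. intros [-> | ->]; [now rewrite Rmult_1_l|]. rewrite <- cos_neg. f_equal. ring. Qed.

Lemma sin_sign s y : s = 1 \/ s = -1 -> sin (s * y) = s * sin y.
Proof.
  intros [-> | ->]; [now rewrite !Rmult_1_l|].
  replace (-1 * y) with (- y) by ring. rewrite sin_neg. ring.
Qed.

Lemma wave_phi s x : s = 1 \/ s = -1 -> wave cos 0 s x = phi1 x /\ wave sin 0 s x = - s * phi2 x.
Proof.
  intros Hs. pose proof r_pos. unfold wave, mode, phi1, phi2.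
  replace (s * (5 / r) * x) with (s * (5 * x / r)) by (field; lra).
  replace (s * (-1 / r) * x) with (s * - (x / r)) by (field; lra).
  replace (s * (-4 / r) * x) with (s * - (4 * x / r)) by (field; lra).
  rewrite !(cos_sign s), !(sin_sign s), !cos_neg, !sin_neg by exact Hs. split; ring.
Qed.

Lemma wave_boundary s : s = 1 \/ s = -1 ->
  wave cos 0 s 0 = 0 /\ wave sin 0 s 0 = 0 /\
  wave cos 0 s Lc = 0 /\ wave sin 0 s Lc = 0 /\ wave sin 1 s Lc = 0 /\ wave cos 1 s Lc = 0.
Proof.
  intros Hs. pose proof r_pos.
  rewrite !wave_at_0, !wave_at_Lc by (exact cos_period_Z || exact sin_period_Z || exact Hs).
  repeat split; field; lra.
Qed.

Lemma phi_boundary : phi1 0 = 0 /\ phi2 0 = 0 /\ phi1 Lc = 0 /\ phi2 Lc = 0.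
Proof.
  assert (Hs : 1 = 1 \/ 1 = -1) by now left.
  destruct (wave_boundary 1 Hs) as (P0 & Q0 & PL & QL & _).
  destruct (wave_phi 1 0 Hs) as [E1 E2], (wave_phi 1 Lc Hs) as [E3 E4].
  lra.
Qed.

Lemma wave_initial s : s = 1 \/ s = -1 ->
  wave sin 1 s 0 = 0 /\ wave cos 1 s 0 = 0 /\ wave sin 2 s 0 = 0 /\ wave cos 2 s 0 = 54 / 21 * Theta.
Proof.
  intros Hs. pose proof r_pos. pose proof r_sq.
  assert (Hs2 : s * s = 1) by (destruct Hs as [-> | ->]; ring).
  rewrite !wave_at_0, cos_0, sin_0. repeat split; try (field; lra).
  replace ((s * (5 / r)) ^ 2 - 3 * (s * (-1 / r)) ^ 2 + 2 * (s * (-4 / r)) ^ 2)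
    with (54 * (s * s) / (r * r)) by (field; lra).
  rewrite Hs2, r_sq. field.
Qed.

Lemma phi1_mid : phi1 (Lc / 2) = - 2 * Theta.
Proof.
  pose proof r_pos. unfold phi1. rewrite Lc_r.
  replace (2 * PI * r / 3 / 2 / r) with (PI / 3) by (field; lra).
  replace (5 * (2 * PI * r / 3 / 2) / r) with (- (PI / 3) + 2 * INR 1 * PI) by (simpl INR; field; lra).
  replace (4 * (2 * PI * r / 3 / 2) / r) with (PI / 3 + PI) by (field; lra).
  rewrite cos_period, cos_neg, neg_cos, cos_PI3. field.
Qed.

(** * The imaginary eigenvalues *)

Lemma rot_dot t1 t2 X Y :
  (cos t1 * X + sin t1 * Y) * (cos t2 * X + sin t2 * Y)
  + (cos t1 * Y - sin t1 * X) * (cos t2 * Y - sin t2 * X) = cos (t1 - t2) * (X ^ 2 + Y ^ 2).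
Proof. rewrite cos_minus. ring. Qed.

Lemma rot_norm t X Y :
  (cos t * X + sin t * Y) ^ 2 + (cos t * Y - sin t * X) ^ 2 = X ^ 2 + Y ^ 2.
Proof.
  transitivity (cos (t - t) * (X ^ 2 + Y ^ 2)); [rewrite <- rot_dot; ring|].
  rewrite Rminus_eq_0, cos_0. ring.
Qed.

Lemma rot_eq_cos_1 t1 t2 X Y P R : P ^ 2 + R ^ 2 <> 0 ->
  cos t1 * X + sin t1 * Y = P -> cos t1 * Y - sin t1 * X = R ->
  cos t2 * X + sin t2 * Y = P -> cos t2 * Y - sin t2 * X = R -> cos (t1 - t2) = 1.
Proof.
  intros HPR H1 H2 H3 H4.
  pose proof (rot_dot t1 t2 X Y) as Hdot. pose proof (rot_norm t1 X Y) as Hnorm.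
  rewrite H1, H2, H3, H4 in Hdot. rewrite H1, H2 in Hnorm. rewrite <- Hnorm in Hdot.
  apply (Rmult_eq_reg_r (P ^ 2 + R ^ 2)); [|exact HPR]. rewrite <- Hdot. ring.
Qed.

Lemma cos_eq_1_0 z : cos z = 1 -> exists k : Z, z = IZR k * (2 * PI).
Proof.
  intros H. replace z with (2 * (z / 2)) in H by field.
  rewrite cos_2a_sin in H.
  destruct (sin_eq_0_0 (z / 2)) as [k Hk]; [nra|].
  exists k. lra.
Qed.

Lemma char_root_real_exists w : exists k, char_root w 0 k.
Proof.
  set (M := Rabs w + 2).
  assert (HM : 2 <= M /\ - M <= w <= M) by (unfold M; split_Rabs; lra).
  destruct (IVT (fun k => k ^ 3 - k - w) (- M) M) as [k [_ Hk]];
    [reg | lra | nra | nra |].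
  exists k. unfold char_root. split; lra.
Qed.

Lemma char_root_complex w k : 4 < 3 * k ^ 2 -> char_root w 0 k ->
  char_root w (sqrt (3 * k ^ 2 - 4) / 2) (- k / 2).
Proof.
  intros Hk [_ Hw]. pose proof (sqrt_sqrt (3 * k ^ 2 - 4)) as Hsq.
  set (d := sqrt (3 * k ^ 2 - 4)) in *. unfold char_root. split.
  - replace ((d / 2) ^ 3 - 3 * (d / 2) * (- k / 2) ^ 2 + d / 2)
      with (d / 8 * (d * d - (3 * k ^ 2 - 4))) by field.
    rewrite Hsq by lra. ring.
  - replace (3 * (d / 2) ^ 2 * (- k / 2) - (- k / 2) ^ 3 + - k / 2 + w)
      with (- 3 / 8 * k * (d * d - (3 * k ^ 2 - 4)) + (3 * 0 ^ 2 * k - k ^ 3 + k + w)) by field.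
    rewrite Hsq, Hw by lra. ring.
Qed.

Lemma char_root_imaginary w k e : 3 * k ^ 2 <= 4 -> e * e = 1 -> char_root w 0 k ->
  char_root w 0 ((- k + e * sqrt (4 - 3 * k ^ 2)) / 2).
Proof.
  intros Hk He [_ Hw]. pose proof (sqrt_sqrt (4 - 3 * k ^ 2)) as Hsq.
  set (d := sqrt (4 - 3 * k ^ 2)) in *. unfold char_root. split; [ring|].
  set (k' := (- k + e * d) / 2).
  replace (3 * 0 ^ 2 * k' - k' ^ 3 + k' + w)
    with ((3 * 0 ^ 2 * k - k ^ 3 + k + w) - (k' - k) / 4 * (e * e * (d * d) - (4 - 3 * k ^ 2)))
    by (unfold k'; field).
  rewrite He, Hsq, Hw by lra. ring.
Qed.

Lemma three_sq_add_sq_28 (S d : Z) : (3 * d * d + S * S = 28)%Z ->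
  (S * (S * S - 21) = 20 \/ S * (S * S - 21) = -20)%Z.
Proof.
  intros H.
  assert (HS : (-5 <= S <= 5)%Z) by nia.
  assert (Hd : (-3 <= d <= 3)%Z) by nia.
  assert (S = -5 \/ S = -4 \/ S = -3 \/ S = -2 \/ S = -1 \/ S = 0 \/ S = 1 \/ S = 2 \/ S = 3 \/ S = 4 \/ S = 5)%Z
    as CS by lia.
  assert (d = -3 \/ d = -2 \/ d = -1 \/ d = 0 \/ d = 1 \/ d = 2 \/ d = 3)%Z as CD by lia.
  repeat destruct CS as [->|CS]; repeat destruct CD as [->|CD]; subst; lia.
Qed.

Lemma cubic_value_of_gaps k k1 k2 (m n : Z) : k1 + k2 = - k -> k1 * k2 = k ^ 2 - 1 ->
  (k - k1) * r = 3 * IZR m -> (k - k2) * r = 3 * IZR n -> k ^ 3 - k = q \/ k ^ 3 - k = - q.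
Proof.
  intros Hsum Hprod Hm Hn. pose proof r_pos as Hr. pose proof r_sq as Hr2.
  (* [m + n = k r] and [n - m = (k1 - k2) r / 3], and Vieta gives [3 (n - m)^2 + (m + n)^2 = 28]. *)
  assert (HS : IZR (m + n) = k * r).
  { rewrite plus_IZR. assert (k1 * r + k2 * r = - k * r) by (rewrite <- Rmult_plus_distr_r, Hsum; ring).
    lra. }
  assert (HD : IZR (n - m) = (k1 - k2) * r / 3) by (rewrite minus_IZR; lra).
  assert (Hgap : (k1 - k2) ^ 2 = 4 - 3 * k ^ 2).
  { replace ((k1 - k2) ^ 2) with ((k1 + k2) ^ 2 - 4 * (k1 * k2)) by ring.
    rewrite Hsum, Hprod. ring. }
  assert (H28 : (3 * (n - m) * (n - m) + (m + n) * (m + n) = 28)%Z).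
  { apply eq_IZR. rewrite plus_IZR, !mult_IZR, HS, HD.
    replace (3 * ((k1 - k2) * r / 3) * ((k1 - k2) * r / 3) + k * r * (k * r))
      with (((k1 - k2) ^ 2 / 3 + k ^ 2) * (r * r)) by field.
    rewrite Hgap, Hr2. field. }
  apply three_sq_add_sq_28 in H28.
  assert (Hcube : IZR ((m + n) * ((m + n) * (m + n) - 21)) = 21 * r * (k ^ 3 - k)).
  { rewrite mult_IZR, minus_IZR, mult_IZR, HS.
    replace (k * r * (k * r * (k * r) - 21)) with (k * r * (k ^ 2 * (r * r) - 21)) by ring.
    rewrite Hr2. ring. }
  unfold q. destruct H28 as [H | H]; rewrite H in Hcube; [left | right];
    apply (Rmult_eq_reg_l (21 * r)); try lra; rewrite <- Hcube; field; lra.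
Qed.

Section Spectrum.

Variables w X Y P R : R.
Hypothesis HPR : P ^ 2 + R ^ 2 <> 0.
Hypothesis Htransfer : forall a b, char_root w a b ->
  exp (- a * Lc) * (cos (b * Lc) * X + sin (b * Lc) * Y) = P /\
  exp (- a * Lc) * (cos (b * Lc) * Y - sin (b * Lc) * X) = R.

Lemma transfer_imaginary k : char_root w 0 k ->
  cos (k * Lc) * X + sin (k * Lc) * Y = P /\ cos (k * Lc) * Y - sin (k * Lc) * X = R.
Proof.
  intros Hk. destruct (Htransfer 0 k Hk) as [H1 H2].
  rewrite Ropp_0, Rmult_0_l, exp_0, Rmult_1_l in H1, H2. now split.
Qed.

Lemma char_root_re_0 a b : char_root w a b -> a = 0.
Proof.
  intros Hab. destruct (char_root_real_exists w) as [k Hk].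
  destruct (transfer_imaginary k Hk) as [H1 H2].
  destruct (Htransfer a b Hab) as [H3 H4].
  pose proof (rot_norm (k * Lc) X Y) as Hk0. rewrite H1, H2 in Hk0.
  pose proof (rot_norm (b * Lc) X Y) as Hb0.
  set (e := exp (- a * Lc)) in *.
  assert (He2 : e ^ 2 * (X ^ 2 + Y ^ 2) = P ^ 2 + R ^ 2) by (rewrite <- H3, <- H4, <- Hb0; ring).
  rewrite <- Hk0 in He2.
  assert (He : e = 1).
  { assert (0 < e) by apply exp_pos.
    assert (e ^ 2 = 1) by (apply (Rmult_eq_reg_r (P ^ 2 + R ^ 2)); lra). nra. }
  rewrite <- exp_0 in He. apply exp_inv in He.
  pose proof Lc_pos. nra.
Qed.

Lemma imaginary_root_gap k k' : char_root w 0 k -> char_root w 0 k' ->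
  exists m : Z, (k - k') * r = 3 * IZR m.
Proof.
  intros Hk Hk'.
  destruct (transfer_imaginary k Hk) as [H1 H2], (transfer_imaginary k' Hk') as [H3 H4].
  destruct (cos_eq_1_0 _ (rot_eq_cos_1 _ _ _ _ _ _ HPR H1 H2 H3 H4)) as [m Hm].
  exists m. rewrite Lc_r in Hm. pose proof PI_RGT_0.
  apply (Rmult_eq_reg_l (2 * PI / 3)); [|lra]. lra.
Qed.

Lemma transfer_pm_q : w = q \/ w = - q.
Proof.
  destruct (char_root_real_exists w) as [k Hk].
  assert (Hw : w = k ^ 3 - k) by (destruct Hk; lra).
  destruct (Rlt_le_dec 4 (3 * k ^ 2)) as [Hc | Hi].
  - exfalso.
    pose proof (char_root_re_0 _ _ (char_root_complex w k Hc Hk)) as H0.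
    assert (0 < sqrt (3 * k ^ 2 - 4)) by (apply sqrt_lt_R0; lra). lra.
  - set (d := sqrt (4 - 3 * k ^ 2)).
    assert (Hd : d * d = 4 - 3 * k ^ 2) by (apply sqrt_sqrt; lra).
    destruct (imaginary_root_gap _ _ Hk (char_root_imaginary w k 1 Hi ltac:(ring) Hk)) as [m Hm].
    destruct (imaginary_root_gap _ _ Hk (char_root_imaginary w k (-1) Hi ltac:(ring) Hk)) as [n Hn].
    fold d in Hm, Hn. rewrite Hw.
    apply (cubic_value_of_gaps k ((- k + 1 * d) / 2) ((- k + -1 * d) / 2) m n); [field | | exact Hm | exact Hn].
    replace ((- k + 1 * d) / 2 * ((- k + -1 * d) / 2)) with ((k ^ 2 - d * d) / 4) by field.
    rewrite Hd. field.
Qed.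

End Spectrum.

Lemma imaginary_eigenvalue_pm_q w : is_eigenvalue 0 w -> w = q \/ w = - q.
Proof.
  intros (u & v & Heig & x0 & Hx0 & Hnz).
  apply eigen_eq_iff in Heig as (u1 & u2 & u3 & v1 & v2 & v3 & S & Hu0 & Hv0 & HuL & HvL & Hu1L & Hv1L).
  pose proof (Rlt_le _ _ Lc_pos) as HL.
  destruct (ode_sol_deriv0_eq0 _ _ _ _ _ _ _ _ _ _ HL S Hu0 Hv0 HuL HvL Hu1L Hv1L) as [Hu10 Hv10].
  apply (transfer_pm_q w (u2 Lc) (v2 Lc) (u2 0) (v2 0)).
  - intros H0. assert (Hu20 : u2 0 = 0) by nra. assert (Hv20 : v2 0 = 0) by nra.
    destruct (ode_sol_zero_of_zero_data _ _ _ _ _ _ _ _ _ _ HL S Hu0 Hu10 Hu20 Hv0 Hv10 Hv20 x0 Hx0).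
    tauto.
  - intros a b Hab. exact (ode_sol_boundary_transfer _ _ _ _ _ _ _ _ _ _ HL S a b Hab
      Hu0 Hv0 Hu10 Hv10 HuL HvL Hu1L Hv1L).
Qed.

Lemma eigen_eq_of_span s u v a b : s = 1 \/ s = -1 ->
  (forall x, 0 <= x <= Lc -> u x = a * phi1 x + s * b * phi2 x /\ v x = b * phi1 x - s * a * phi2 x) ->
  eigen_eq 0 (s * q) u v.
Proof.
  intros Hs Huv.
  assert (W := ode_sol_cmul _ _ a b _ _ _ _ _ _ _ _ (wave_sol Lc s ltac:(destruct Hs as [-> | ->]; ring))).
  destruct (wave_boundary s Hs) as (_ & _ & _ & _ & P1L & Q1L).
  destruct phi_boundary as (P0 & Q0 & PL & QL).
  pose proof Lc_pos.
  apply eigen_eq_iff. do 6 eexists. split.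
  - eapply ode_sol_ext; [|exact W]. intros x Hx.
    destruct (wave_phi s x Hs) as [-> ->], (Huv x Hx) as [-> ->]. split; ring.
  - destruct (Huv 0 ltac:(lra)) as [-> ->], (Huv Lc ltac:(lra)) as [-> ->].
    rewrite P0, Q0, PL, QL, P1L, Q1L. repeat split; ring.
Qed.

Lemma span_of_eigen_eq s u v : s = 1 \/ s = -1 -> eigen_eq 0 (s * q) u v ->
  exists a b, forall x, 0 <= x <= Lc ->
    u x = a * phi1 x + s * b * phi2 x /\ v x = b * phi1 x - s * a * phi2 x.
Proof.
  intros Hs Heig.
  apply eigen_eq_iff in Heig as (u1 & u2 & u3 & v1 & v2 & v3 & S & Hu0 & Hv0 & HuL & HvL & Hu1L & Hv1L).
  pose proof (Rlt_le _ _ Lc_pos) as HL.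
  destruct (ode_sol_deriv0_eq0 _ _ _ _ _ _ _ _ _ _ HL S Hu0 Hv0 HuL HvL Hu1L Hv1L) as [Hu10 Hv10].
  destruct (wave_boundary s Hs) as (P0 & Q0 & _).
  destruct (wave_initial s Hs) as (P1 & Q1 & P2 & Q2).
  set (kappa := 54 / 21 * Theta) in Q2.
  assert (Hk : kappa <> 0) by (unfold kappa; pose proof Theta_pos; lra).
  (* [phi - (a + i b) psi] has zero Cauchy data at [0], where [psi = wave cos 0 s + i wave sin 0 s]
     satisfies [psi 0 = psi' 0 = 0] and [psi'' 0 = - kappa]. *)
  set (a := - u2 0 / kappa). set (b := - v2 0 / kappa).
  exists a, b. intros x Hx.
  pose proof (ode_sol_sub _ _ _ _ _ _ _ _ _ _ _ _ _ _ _ _ _ _ S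
    (ode_sol_cmul _ _ a b _ _ _ _ _ _ _ _ (wave_sol Lc s ltac:(destruct Hs as [-> | ->]; ring)))) as D.
  assert (Hzero : forall y, 0 <= y <= Lc ->
    u y - (a * wave cos 0 s y - b * wave sin 0 s y) = 0 /\
    v y - (a * wave sin 0 s y + b * wave cos 0 s y) = 0).
  { apply (ode_sol_zero_of_zero_data _ _ _ _ _ _ _ _ _ _ HL D); cbv beta;
      rewrite ?P0, ?Q0, ?P1, ?Q1, ?P2, ?Q2, ?Hu0, ?Hv0, ?Hu10, ?Hv10;
      unfold a, b; field; exact Hk. }
  destruct (Hzero x Hx) as [Du Dv].
  destruct (wave_phi s x Hs) as [E1 E2]. rewrite E1, E2 in Du, Dv. split; lra.
Qed.

Theorem lemma2p3 :
  (forall w : R, is_eigenvalue 0 w <-> (w = q \/ w = - q)) /\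
  (forall s : R, (s = 1 \/ s = -1) ->
     forall u v : R -> R,
       eigen_eq 0 (s * q) u v <->
       exists a b : R, forall x, 0 <= x <= Lc ->
         u x = a * phi1 x + s * b * phi2 x /\
         v x = b * phi1 x - s * a * phi2 x).
Proof.
  split.
  - intros w. split; [apply imaginary_eigenvalue_pm_q|].
    intros Hw.
    assert (Hs : exists s, (s = 1 \/ s = -1) /\ w = s * q)
      by (destruct Hw as [-> | ->]; [exists 1 | exists (-1)]; split; auto; ring).
    destruct Hs as [s [Hs ->]].
    exists phi1, (fun x => - s * phi2 x). split.
    + apply (eigen_eq_of_span s _ _ 1 0 Hs). intros x _. split; ring.
    + exists (Lc / 2). pose proof Lc_pos. pose proof Theta_pos.
      split; [lra|]. left. rewrite phi1_mid. lra.
  - intros s Hs u v. split; [now apply span_of_eigen_eq|].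
    intros [a [b H]]. exact (eigen_eq_of_span s u v a b Hs H).
Qed.
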